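(* Let $x \in \mathcal{O}_s \cup \mathcal{O}_t$ with $x \neq 1$, and let $\lambda = \left(x^{q-1} + x^{-(q-1)}\right)^{q-1}$. Then $$x^{q+1} + \sqrt{(\lambda^{\sqrt{2q}}+1)\lambda}\; x + \lambda^{\sqrt{2q}/2} = 0,$$ where $\sqrt{y}$ denotes the unique square root of $y$ in $E$.
   Context: Let $q = 2^m$ with $m \ge 3$ odd, so that $\sqrt{2q} = 2^{(m+1)/2}$ is an integer and $\sqrt{2q}/2 = 2^{(m-1)/2}$. Let $E = \mathbb{F}_{q^4}$. Put $s = q - \sqrt{2q} + 1$ and $t = q + \sqrt{2q} + 1$. Define $\mathcal{O}_s = \{x \in E \mid x^s = 1\}$ and $\mathcal{O}_t = \{x \in E \mid x^t = 1\}$. *)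

From mathcomp Require Import all_boot all_order all_algebra all_field.
Set Implicit Arguments. Unset Strict Implicit. Unset Printing Implicit Defensive.

Definition qq (m : nat) : nat := 2 ^ m.
(* sqrt(2q) = 2^((m+1)/2)  (an integer when m is odd) *)
Definition sqrt2q (m : nat) : nat := 2 ^ ((m + 1) %/ 2).
Definition half_sqrt2q (m : nat) : nat := 2 ^ ((m - 1) %/ 2).
Definition ss (m : nat) : nat := qq m - sqrt2q m + 1.
Definition tt (m : nat) : nat := qq m + sqrt2q m + 1.

From mathcomp Require Import all_boot all_order all_algebra all_field.
From mathcomp Require Import ring zify.
Set Implicit Arguments. Unset Strict Implicit. Unset Printing Implicit Defensive.
Import GRing.Theory.
Local Open Scope ring_scope.

(* Put Q = x^q.  As s t = q^2 + 1, x^(q^2+1) = 1, hence Q^q = x^-1; in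
   characteristic 2 raising to the powers q and sqrt(2q) is additive.  This
   makes lambda the square of mu = (1 + x Q) / (Q + x).  In either case x^sqrt(2q)
   is x Q or its inverse, and since sqrt(2q)^2 = 2q this determines Q^sqrt(2q),
   which yields mu^sqrt(2q) = nu := x (1 + Q^2) / (Q (1 + x^2)).  Thus
   lambda^(sqrt(2q)/2) = nu, the square root is mu (nu + 1), and the equation
   becomes a rational identity in x and Q that holds up to a multiple of 2. *)

Section Exponents.
Variable m : nat.
Hypothesis m_odd : odd m.

Let m_half : m = ((m - 1) %/ 2).*2.+1.
Proof. by have := odd_double_half m; rewrite m_odd; lia. Qed.

Lemma sqrt2q_half : sqrt2q m = (2 * half_sqrt2q m)%N.
Proof. by rewrite /sqrt2q /half_sqrt2q -expnS; congr (2 ^ _)%N; lia. Qed.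

Lemma sqrt2q_sqr : (sqrt2q m * sqrt2q m = 2 * qq m)%N.
Proof. by rewrite /sqrt2q /qq -expnD -expnS; congr (2 ^ _)%N; lia. Qed.

Lemma ss_add_sqrt2q : (ss m + sqrt2q m = qq m + 1)%N.
Proof.
suff : (sqrt2q m <= qq m)%N by rewrite /ss; lia.
by rewrite /sqrt2q /qq leq_exp2l //; lia.
Qed.

Lemma ss_mul_tt : (ss m * tt m = qq m * qq m + 1)%N.
Proof.
have := sqrt2q_sqr; have := ss_add_sqrt2q; rewrite /tt.
move: (ss m) (sqrt2q m) (qq m) => a b c; nia.
Qed.

End Exponents.

Section Char2Field.
Variable F : fieldType.
Hypothesis charF2 : 2%N \in [pchar F].

Lemma exprD_pchar2n k (a b : F) : (a + b) ^+ (2 ^ k) = a ^+ (2 ^ k) + b ^+ (2 ^ k).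
Proof. by apply: exprDn_pchar; rewrite pnatX (eq_pnat _ (pcharf_eq charF2)) pnat_id. Qed.

Lemma sqrf_inj_pchar2 : injective (fun a : F => a ^+ 2).
Proof. exact: (fmorph_inj (pFrobenius_aut charF2)). Qed.

Lemma sqrD_pchar2 (a b : F) : (a + b) ^+ 2 = a ^+ 2 + b ^+ 2.
Proof. exact: (exprD_pchar2n 1). Qed.

Lemma addr_eq0_pchar2 (a b : F) : (a + b == 0) = (a == b).
Proof. by rewrite addr_eq0 oppr_pchar2. Qed.

Lemma sqrf_eq1_pchar2 (a : F) : (a ^+ 2 == 1) = (a == 1).
Proof. by rewrite sqrf_eq1 oppr_pchar2 // orbb. Qed.

Section QuadraticRelation.
Variables (k j : nat) (x : F).
Let q := (2 ^ k)%N.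
Let s := (2 ^ j)%N.
Let Q := x ^+ q.
Hypothesis x_neq1 : x != 1.
Hypothesis x_order : x ^+ (q * q + 1) = 1.
Hypothesis s_sqr : (s * s = 2 * q)%N.
Hypothesis xs_cases : x ^+ s = Q * x \/ x ^+ s * (Q * x) = 1.

Definition lambda := (x ^+ (q - 1) + x ^- (q - 1)) ^+ (q - 1).
Definition mu := (1 + x * Q) / (Q + x).
Definition nu := x * (1 + Q ^+ 2) / (Q * (1 + x ^+ 2)).

Let q_gt0 : (0 < q)%N. Proof. by rewrite expn_gt0. Qed.

Lemma x_neq0 : x != 0.
Proof.
by apply: contra_eq_neq x_order => ->; rewrite expr0n addn1 eq_sym oner_eq0.
Qed.

Let Q_neq0 : Q != 0. Proof. by rewrite expf_neq0 // x_neq0. Qed.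

Lemma Q_expr_q : Q ^+ q = x^-1.
Proof.
by apply: (mulIf x_neq0); rewrite mulVf ?x_neq0 // /Q -exprM -exprSr -addn1.
Qed.

Lemma Q_add_x_neq0 : Q + x != 0.
Proof.
rewrite addr_eq0_pchar2; apply: contra_neq x_neq1 => Q_eq_x.
have x_inv : x^-1 = x by rewrite -Q_expr_q {1}Q_eq_x.
by apply/eqP; rewrite -sqrf_eq1_pchar2 expr2 -{1}x_inv mulVf ?x_neq0.
Qed.

Lemma one_add_sqr_x_neq0 : 1 + x ^+ 2 != 0.
Proof.
by rewrite -[1](expr1n _ 2) -sqrD_pchar2 sqrf_eq0 addr_eq0_pchar2 eq_sym.
Qed.

Lemma lambda_eq_sqr_mu : lambda = mu ^+ 2.
Proof.
have expr_q1 (y : F) : y != 0 -> y ^+ (q - 1) = y ^+ q / y.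
  by move=> y_neq0; rewrite -{2}(subnK q_gt0) exprD expr1 mulfK.
set w := Q / x + (Q / x)^-1.
have w_neq0 : w != 0.
  have -> : w = (Q + x) ^+ 2 / (Q * x).
    by rewrite /w sqrD_pchar2; field; rewrite x_neq0 Q_neq0.
  by rewrite mulf_neq0 ?invr_neq0 ?mulf_neq0 ?sqrf_eq0 ?Q_add_x_neq0 ?x_neq0.
have w_q : w ^+ q = x^-1 / Q + (x^-1 / Q)^-1.
  by rewrite /w exprD_pchar2n !expr_div_n exprVn expr_div_n Q_expr_q.
have QQxx : Q ^+ 2 + x ^+ 2 != 0 by rewrite -sqrD_pchar2 sqrf_eq0 Q_add_x_neq0.
rewrite /lambda (expr_q1 x) ?x_neq0 // -/Q -/w expr_q1 // w_q /mu expr_div_n.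
rewrite !sqrD_pchar2 exprMn expr1n /w; field.
by rewrite QQxx x_neq0 Q_neq0 oner_neq0.
Qed.

Lemma mu_expr_s : mu ^+ s = nu.
Proof.
set S := x ^+ s.
have S_s : S ^+ s = Q ^+ 2 by rewrite -exprM s_sqr mulnC exprM.
have QsS : Q ^+ s * S = (Q * x) ^+ s by rewrite exprMn.
rewrite /mu expr_div_n !exprD_pchar2n expr1n exprMn -/S.
have Qx_neq0 : Q * x != 0 by rewrite mulf_neq0 ?x_neq0.
case: xs_cases; rewrite -/S => S_eq.
- have Qs : Q ^+ s = Q / x.
    apply: (mulIf (_ : S != 0)); first by rewrite S_eq.
    by rewrite QsS -S_eq S_s S_eq; field; rewrite x_neq0.
  rewrite Qs S_eq /nu; field.
  have -> : Q + Q * x * x = Q * (1 + x ^+ 2) by ring.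
  by rewrite mulf_neq0 ?one_add_sqr_x_neq0 ?Q_neq0 ?x_neq0.
- have {}S_eq : S = (Q * x)^-1 by apply: (mulIf Qx_neq0); rewrite S_eq mulVf.
  have Qs : Q ^+ s = x / Q.
    apply: (mulIf (_ : S != 0)); first by rewrite S_eq invr_eq0.
    by rewrite QsS -[Q * x]invrK -S_eq exprVn S_s S_eq; field; rewrite Q_neq0 x_neq0.
  rewrite Qs S_eq /nu; field.
  by rewrite one_add_sqr_x_neq0 Q_neq0 x_neq0.
Qed.

Lemma mu_root : Q * x + x * (mu * (nu + 1)) + nu = 0.
Proof.
have -> : Q * x + x * (mu * (nu + 1)) + nu
          = 2 * (x * (mu * (nu + 1)) + x * (Q - x) / (1 + x ^+ 2)).
  rewrite /nu /mu; field.
  by rewrite one_add_sqr_x_neq0 Q_neq0 Q_add_x_neq0.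
by rewrite (pcharf0 charF2) mul0r.
Qed.

Lemma quadratic_relation h r :
  (s = 2 * h)%N -> r ^+ 2 = (lambda ^+ s + 1) * lambda ->
  x ^+ (q + 1) + r * x + lambda ^+ h = 0.
Proof.
move=> s_eq r_sqr.
have lambda_h : lambda ^+ h = nu by rewrite lambda_eq_sqr_mu -exprM -s_eq mu_expr_s.
have r_eq : r = mu * (nu + 1).
  apply: sqrf_inj_pchar2; rewrite /= exprMn sqrD_pchar2 expr1n r_sqr.
  by rewrite lambda_eq_sqr_mu -exprM mulnC exprM mu_expr_s mulrC.
by rewrite lambda_h r_eq addn1 exprSr -/Q [mu * _ * x]mulrC mu_root.
Qed.

End QuadraticRelation.

End Char2Field.

Theorem lemma4p2 (m : nat) (E : finFieldType)
  (hm : (3 <= m)%N) (hodd : odd m) (hE : #|E| = (qq m ^ 4)%N)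
  (x : E) (hx : x ^+ ss m = 1 \/ x ^+ tt m = 1) (hx1 : x != 1)
  (r : E)
  (hr : let lam := (x ^+ (qq m - 1) + x ^- (qq m - 1)) ^+ (qq m - 1) in
        r ^+ 2 = (lam ^+ sqrt2q m + 1) * lam) :
  let lam := (x ^+ (qq m - 1) + x ^- (qq m - 1)) ^+ (qq m - 1) in
  x ^+ (qq m + 1) + r * x + lam ^+ half_sqrt2q m = 0.
Proof.
have charE2 : 2%N \in [pchar E].
  by apply: (card_finPcharP (n := (m * 4)%N)); rewrite // hE /qq -expnM.
have x_order : x ^+ (qq m * qq m + 1) = 1.
  rewrite -ss_mul_tt //.
  by case: hx => x1; [rewrite exprM | rewrite mulnC exprM]; rewrite x1 expr1n.
have xs_cases : x ^+ sqrt2q m = x ^+ qq m * x \/ x ^+ sqrt2q m * (x ^+ qq m * x) = 1.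
  case: hx => [x_ss | x_tt]; [left | right]; rewrite -exprSr -addn1.
  - by rewrite -ss_add_sqrt2q // exprD x_ss mul1r.
  - by rewrite -exprD -x_tt /tt; congr (_ ^+ _); lia.
exact: (quadratic_relation (k := m) (j := (m + 1) %/ 2) charE2 hx1 x_order
          (sqrt2q_sqr hodd) xs_cases (sqrt2q_half hodd) hr).
Qed.
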